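(* Let $m\geq 2$ and let $f=a_0+a_1z+\cdots+a_mz^m\in\mathbb{Z}[z]$ be a primitive polynomial with $a_0a_m\neq 0$ such that $$|a_{m-1}|>1+|a_0||a_m|^{m-1}+|a_1||a_m|^{m-2}+\cdots+|a_{m-2}||a_m|.$$ Then $f$ is irreducible in $\mathbb{Z}[z]$.
   Context: A polynomial in $\mathbb{Z}[z]$ is primitive if the greatest common divisor of its coefficients is $1$. *)

From mathcomp Require Import all_boot all_order all_algebra.
Set Implicit Arguments. Unset Strict Implicit. Unset Printing Implicit Defensive.
Import Order.TTheory GRing.Theory Num.Theory.
Local Open Scope ring_scope.

Definition primitive_intpoly (f : {poly int}) : Prop :=
  \big[gcdz/0]_(i < size f) f`_i = 1.

Definition irreducible_in_Zz (f : {poly int}) : Prop :=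
  f != 0 /\ f \isn't a GRing.unit /\
  forall g h : {poly int}, f = g * h -> g \is a GRing.unit \/ h \is a GRing.unit.

(* Write a for the leading coefficient of f.  The monic polynomial
   F(z) = a^(m-1) f(z/a) has coefficients a_i a^(m-1-i), so the hypothesis says
   that its z^(m-1) coefficient exceeds the sum of the moduli of the lower ones by
   more than 1 (by at least 2, since everything is an integer).  Such an F has at
   most one root of modulus >= 1: a root alpha with |alpha| >= 1 must satisfy
   |alpha| > 1 + (that sum), hence the lower coefficients of F / (z - alpha) have
   total modulus < 1 and all its roots lie in the open unit disc.  On the other
   hand, if f = g h with g and h nonconstant, then |g_0| >= 1 and |lc g| <= |a|
   force some root x of g to satisfy |a x| >= 1, and likewise for h; this gives
   two roots a x, a y of F of modulus >= 1. *)

From mathcomp Require Import all_boot all_order all_algebra algC ring.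
Set Implicit Arguments. Unset Strict Implicit. Unset Printing Implicit Defensive.
Import Order.TTheory GRing.Theory Num.Theory.
Local Open Scope ring_scope.

Section Rescale.
Variable F : fieldType.
Implicit Types (p q : {poly F}) (c x : F).

Lemma coef_comp_polyZX p c i : (p \Po (c *: 'X))`_i = p`_i * c ^+ i.
Proof.
have -> : p \Po (c *: 'X) = \poly_(j < size p) (p`_j * c ^+ j).
  by rewrite comp_polyE poly_def; apply: eq_bigr => j _; rewrite exprZn scalerA.
rewrite coef_poly; case: ltnP => // le_p_i.
by rewrite nth_default // mul0r.
Qed.

Definition rescale p : {poly F} :=
  lead_coef p ^+ (size p).-2 *: (p \Po ((lead_coef p)^-1 *: 'X)).

Lemma coef_rescale p i : (i < (size p).-1)%N ->
  (rescale p)`_i = p`_i * lead_coef p ^+ ((size p).-2 - i).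
Proof.
move=> lt_i_p; have p_neq0 : p != 0 by apply: contraTneq lt_i_p => ->; rewrite size_poly0.
rewrite coefZ coef_comp_polyZX exprVn mulrCA expfB_cond //.
by rewrite lead_coef_eq0 (negbTE p_neq0); case: (size p) lt_i_p => [|[|k]].
Qed.

Lemma size_rescale p : size (rescale p) = size p.
Proof.
have [->|p_neq0] := eqVneq p 0; first by rewrite /rescale comp_poly0 scaler0.
have lp_neq0 : lead_coef p != 0 by rewrite lead_coef_eq0.
rewrite size_scale ?expf_neq0 // size_comp_poly2 //.
by rewrite size_scale ?invr_eq0 // size_polyX.
Qed.

Lemma rescale_monic p : (1 < size p)%N -> rescale p \is monic.
Proof.
move=> gt1_p; have p_neq0 : p != 0 by rewrite -size_poly_gt0 ltnW.
have lp_neq0 : lead_coef p != 0 by rewrite lead_coef_eq0.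
apply/monicP; rewrite /lead_coef size_rescale coefZ coef_comp_polyZX -/(lead_coef p).
case: (size p) gt1_p => [|[|k]] // _ /=.
by rewrite exprVn mulrA -exprSr divff ?expf_neq0.
Qed.

Lemma rescale_XsubC_mul p q x : p = ('X - x%:P) * q ->
  exists2 r, rescale p = ('X - (lead_coef p * x)%:P) * r &
             forall y, root q y -> root r (lead_coef p * y).
Proof.
move=> def_p; have [->|p_neq0] := eqVneq p 0.
  by exists 0 => [|y _]; rewrite ?mulr0 /rescale ?comp_poly0 ?scaler0 // rootC.
set b := lead_coef p; have b_neq0 : b != 0 by rewrite lead_coef_eq0.
exists ((b ^+ (size p).-2 / b) *: (q \Po (b^-1 *: 'X))) => [|y qy0].
  rewrite /rescale -/b {2}def_p comp_polyM comp_polyB comp_polyX comp_polyC.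
  have -> : b^-1 *: 'X - x%:P = b^-1 *: ('X - (b * x)%:P).
    by rewrite scalerBr scale_polyC mulKf.
  by rewrite -scalerAl scalerA -scalerAr mulrC.
by rewrite /root hornerZ horner_comp hornerZ hornerX mulKf // (rootP qy0) mulr0.
Qed.

End Rescale.

Section SmallRoots.
Variable R : numFieldType.
Implicit Types (p q : {poly R}) (a z : R).

Lemma norm_sum_expr_le (u : nat -> R) z k : 1 <= `|z| ->
  `|\sum_(i < k) u i * z ^+ i| * `|z| <= (\sum_(i < k) `|u i|) * `|z| ^+ k.
Proof.
move=> z_ge1; rewrite -normrM !mulr_suml; apply: le_trans (ler_norm_sum _ _ _) _.
apply: ler_sum => i _; rewrite -mulrA -exprSr normrM normrX.
by apply: ler_wpM2l => //; apply: ler_weXn2l.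
Qed.

Lemma monic_hornerE p z k : p \is monic -> size p = k.+1 ->
  p.[z] = z ^+ k + \sum_(i < k) p`_i * z ^+ i.
Proof.
move=> /monicP lead_p size_p; rewrite horner_coef size_p big_ord_recr addrC /=.
by move: lead_p; rewrite /lead_coef size_p /= => ->; rewrite mul1r.
Qed.

Lemma monic_root_lt1 p z : p \is monic ->
  \sum_(i < (size p).-1) `|p`_i| < 1 -> root p z -> `|z| < 1.
Proof.
move=> mon_p tail_lt1 /rootP pz0; set k := (size p).-1 in tail_lt1.
have size_p : size p = k.+1 by rewrite prednK // size_poly_gt0 monic_neq0.
rewrite real_ltNge ?normr_real //; apply/negP => z_ge1.
have zk_gt0 : 0 < `|z| ^+ k by apply: lt_le_trans (exprn_ege1 _ z_ge1).
have zk : z ^+ k = - \sum_(i < k) p`_i * z ^+ i.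
  by apply/eqP; rewrite -addr_eq0 -(monic_hornerE z mon_p size_p) pz0.
have : `|z ^+ k| * `|z| <= (\sum_(i < k) `|p`_i|) * `|z| ^+ k.
  by rewrite zk normrN norm_sum_expr_le.
rewrite normrX mulrC ler_pM2r // => z_le_tail.
by have := le_lt_trans z_ge1 (le_lt_trans z_le_tail tail_lt1); rewrite ltxx.
Qed.

Lemma monic_big_root_gt p z n : p \is monic -> size p = n.+2 ->
  \sum_(i < n) `|p`_i| + 2 <= `|p`_n| -> root p z -> 1 <= `|z| ->
  \sum_(i < n) `|p`_i| + 1 < `|z|.
Proof.
move=> mon_p size_p coef_gap /rootP pz0 z_ge1.
set s := \sum_(i < n) _ in coef_gap *; set c := p`_n in coef_gap.
have zn_gt0 : 0 < `|z| ^+ n by apply: lt_le_trans (exprn_ege1 _ z_ge1).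
have zn : z ^+ n * (z + c) = - \sum_(i < n) p`_i * z ^+ i.
  move: pz0; rewrite (monic_hornerE z mon_p size_p) big_ord_recr /= => /eqP.
  by rewrite addrCA addrC exprSr [p`_n * _]mulrC -mulrDr addr_eq0 => /eqP.
have : `|z ^+ n * (z + c)| * `|z| <= s * `|z| ^+ n.
  by rewrite zn normrN norm_sum_expr_le.
rewrite normrM normrX -mulrA mulrC ler_pM2r // mulrC.
set A := `|z|; set C := `|c| in coef_gap *; move=> near_root.
have s_ge0 : 0 <= s by apply: sumr_ge0.
rewrite real_ltNge ?realE ?normr_ge0 ?(addr_ge0 s_ge0) //; apply/negP => A_le.
(* If A <= s + 1 both factors are nonnegative, yet the product equals
   A (C - A) - (C - 1) <= s - (C - 1) < 0. *)
have : 0 <= (A - 1) * (C - 1 - A).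
  apply: mulr_ge0; rewrite subr_ge0 // lerBrDr; apply: le_trans coef_gap.
  by rewrite -[2]/(1 + 1) addrA lerD2r.
rewrite (_ : _ * _ = A * (C - A) - (C - 1)); last by ring.
rewrite subr_ge0 => le_C1.
have : C - 1 <= s.
  apply: le_trans le_C1 (le_trans _ near_root); apply: ler_wpM2l; first exact: normr_ge0.
  by rewrite [z + c]addrC lerB_normD.
by rewrite lerBlDr => /(le_trans coef_gap); rewrite lerD2l lern1.
Qed.

Lemma cofactor_tail_lt1 p q a n : p = ('X - a%:P) * q ->
  \sum_(j < n) `|p`_j| + 1 < `|a| -> \sum_(j < n) `|q`_j| < 1.
Proof.
move=> def_p tail_lt.
have coef_p j : a * q`_j = (if j is j'.+1 then q`_j' else 0) - p`_j.
  by rewrite def_p mulrBl coefB coefXM coefCM; case: j => [|j] /=; rewrite subKr.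
have shift_le :
    \sum_(j < n) `|if val j is j'.+1 then q`_j' else 0| <= \sum_(j < n) `|q`_j|.
  case: n {tail_lt} => [|n]; first by rewrite !big_ord0.
  by rewrite big_ord_recl /= normr0 add0r big_ord_recr /= lerDl.
set s := \sum_(j < n) _ in tail_lt; set S := \sum_(j < n) `|q`_j|.
have : `|a| * S <= S + s.
  apply: le_trans _ (lerD shift_le (lexx s)); rewrite -big_split mulr_sumr /=.
  by apply: ler_sum => j _; rewrite -normrM coef_p ler_normB.
have a1_gt0 : 0 < `|a| - 1.
  by rewrite subr_gt0 (le_lt_trans _ tail_lt) // lerDr sumr_ge0.
rewrite -lerBlDl => le_S; rewrite -(ltr_pM2l a1_gt0) mulr1 mulrBl mul1r.
by apply: le_lt_trans le_S _; rewrite ltrBrDr.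
Qed.

Lemma cofactor_root_lt1 p q a z n : p \is monic -> size p = n.+2 ->
  \sum_(i < n) `|p`_i| + 2 <= `|p`_n| -> p = ('X - a%:P) * q -> 1 <= `|a| ->
  root q z -> `|z| < 1.
Proof.
move=> mon_p size_p coef_gap def_p a_ge1 qz0.
have mon_q : q \is monic by move: mon_p; rewrite def_p monicMl // monicXsubC.
have size_q : size q = n.+1.
  by move: size_p; rewrite def_p size_monicM ?monicXsubC ?monic_neq0 // size_XsubC => -[].
have pa0 : root p a by rewrite def_p rootM root_XsubC eqxx.
apply: monic_root_lt1 mon_q _ qz0; rewrite size_q /=.
exact: cofactor_tail_lt1 def_p (monic_big_root_gt mon_p size_p coef_gap pa0 a_ge1).
Qed.

End SmallRoots.

Lemma exists_root_norm_ge1 (C : numClosedFieldType) (p : {poly C}) (b : C) :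
  (1 < size p)%N -> `|lead_coef p| <= `|b| ^+ (size p).-1 * `|p`_0| ->
  exists2 x, root p x & 1 <= `|b * x|.
Proof.
move=> gt1_p lead_le.
have p_neq0 : p != 0 by rewrite -size_poly_gt0 ltnW.
have lp_gt0 : 0 < `|lead_coef p| by rewrite normr_gt0 lead_coef_eq0.
have [r def_p] := closed_field_poly_normal p.
have size_r : size r = (size p).-1.
  by rewrite def_p size_scale ?lead_coef_eq0 // (size_prod_XsubC r id).
have [/hasP [x r_x bx_ge1] | /hasPn small] := boolP (has (fun x => 1 <= `|b * x|) r).
  by exists x => //; rewrite def_p rootZ ?lead_coef_eq0 // root_prod_XsubC.
have coef0_p : `|p`_0| = `|lead_coef p| * \prod_(x <- r) `|x|.
  rewrite -horner_coef0 {1}def_p hornerZ horner_prod normrM normr_prod.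
  by congr (_ * _); apply: eq_bigr => x _; rewrite hornerXsubC sub0r normrN.
have scale_prod : `|b| ^+ size r * \prod_(x <- r) `|x| = \prod_(x <- r) `|b * x|.
  elim: r {def_p size_r small coef0_p} => [|x r IH]; first by rewrite !big_nil mulr1.
  by rewrite !big_cons -IH exprS normrM mulrACA.
have {}small y : y \in r -> `|b * y| < 1.
  by move/small; rewrite real_ltNge ?normr_real ?real1.
have prod_lt1 : \prod_(x <- r) `|b * x| < 1.
  case: r size_r small {def_p coef0_p scale_prod} => [|x r] size_r small.
    by case: (size p) gt1_p size_r => [|[|]].
  rewrite big_cons (le_lt_trans _ (small x (mem_head _ _))) // ler_piMr //.
  rewrite big_seq prodr_ile1 // => y r_y.
  by rewrite normr_ge0 ltW // small // in_cons r_y orbT.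
move: lead_le; rewrite -size_r coef0_p mulrCA scale_prod ler_pMr //.
by rewrite real_leNgt ?prod_lt1 ?real1 ?realE ?prodr_ge0.
Qed.

Lemma primitive_intpoly_neq0 f : primitive_intpoly f -> f != 0.
Proof.
by move=> prim; apply/eqP=> f0; move: prim; rewrite /primitive_intpoly f0 size_poly0 big_ord0.
Qed.

Lemma primitive_const_factor_unit f g h : f = g * h -> primitive_intpoly f ->
  (size g <= 1)%N -> g \is a GRing.unit.
Proof.
move=> def_f prim size_g.
have def_g := size1_polyC size_g.
have g0_dvd1 : (g`_0 %| 1)%Z.
  rewrite -[1%Z]prim; apply: (big_ind (fun v => (g`_0 %| v)%Z)) => // [u v gu gv|i _].
    by rewrite dvdz_gcd gu gv.
  by move: (val i) => j; rewrite def_f {1}def_g coefCM dvdz_mulr.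
have g_neq0 : g != 0.
  by apply: contraTneq (primitive_intpoly_neq0 prim) => g0; rewrite def_f g0 mul0r eqxx.
rewrite poly_unitE eqn_leq size_g size_poly_gt0 g_neq0 /=.
have [k def_1] := dvdzP g0_dvd1; apply/unitrPr; exists k.
by rewrite mulrC -def_1.
Qed.

Lemma int_neq0_norm_ge1 (z : int) : z != 0 -> 1 <= `|z|.
Proof. by rewrite -normr_gt0 gtz0_ge1. Qed.

Lemma factor_root_norm_ge1 (C : numClosedFieldType) (g h : {poly int}) :
  (1 < size g)%N -> (g * h)`_0 != 0 ->
  exists2 x : C, root (map_poly intr g) x & 1 <= `|(lead_coef (g * h))%:~R * x|.
Proof.
move=> gt1_g; rewrite coef0M mulf_eq0 negb_or => /andP[g0_neq0 h0_neq0].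
have h_neq0 : h != 0 by apply: contraNneq h0_neq0 => ->; rewrite coef0.
have g_neq0 : g != 0 by rewrite -size_poly_gt0 ltnW.
apply: exists_root_norm_ge1.
  by rewrite (size_map_inj_poly intr_inj).
rewrite (size_map_inj_poly intr_inj) // (lead_coef_map_inj intr_inj) // coef_map /=.
rewrite -!intr_norm -rmorphXn -rmorphM ler_int lead_coefM normrM.
set a := `|lead_coef g|; set b := `|lead_coef h|.
have b_ge1 : 1 <= b by rewrite int_neq0_norm_ge1 ?lead_coef_eq0.
have ab_ge1 : 1 <= a * b.
  by rewrite (le_trans b_ge1) // ler_peMl // int_neq0_norm_ge1 ?lead_coef_eq0.
apply: le_trans (ler_peMr _ (int_neq0_norm_ge1 g0_neq0)); last exact: exprn_ge0.
apply: le_trans (ler_eXnr _ ab_ge1); first by rewrite ler_peMr.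
by rewrite -subn1 subn_gt0.
Qed.

Lemma rescale_intr_coef_gap (C : numFieldType) (f : {poly int}) n :
  size f = n.+2 ->
  1 + \sum_(i < n) `|f`_i| * `|lead_coef f| ^+ (n - i) < `|f`_n| ->
  \sum_(i < n) `|(rescale (map_poly intr f : {poly C}))`_i| + 2
    <= `|(rescale (map_poly intr f : {poly C}))`_n|.
Proof.
move=> size_f gap; set F := rescale _.
have size_fC : size (map_poly intr f : {poly C}) = n.+2.
  by rewrite (size_map_inj_poly intr_inj).
have coef_F i : (i <= n)%N -> `|F`_i| = (`|f`_i| * `|lead_coef f| ^+ (n - i))%:~R.
  move=> le_i_n; rewrite coef_rescale size_fC // (lead_coef_map_inj intr_inj) //.
  by rewrite coef_map /= normrM normrX intrM rmorphXn /= !intr_norm.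
rewrite coef_F // subnn expr0 mulr1.
rewrite (eq_bigr _ (fun (i : 'I_n) _ => coef_F i (ltnW (ltn_ord i)))) -rmorph_sum /=.
rewrite -[2 : C]/(2%:~R) -intrD ler_int.
by rewrite -lezD1 [1 + _]addrC -addrA in gap.
Qed.

Lemma dominant_subleading_factor_const (f g h : {poly int}) n :
  size f = n.+2 -> f`_0 != 0 ->
  1 + \sum_(i < n) `|f`_i| * `|lead_coef f| ^+ (n - i) < `|f`_n| ->
  f = g * h -> (size g <= 1)%N || (size h <= 1)%N.
Proof.
move=> size_f f0_neq0 gap def_f.
case: leqP => //= gt1_g; case: leqP => // gt1_h; exfalso.
have [x gx0 ax_ge1] : exists2 x : algC,
    root (map_poly intr g) x & 1 <= `|(lead_coef f)%:~R * x|.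
  by rewrite def_f; apply: factor_root_norm_ge1; rewrite // -def_f.
have [y hy0 ay_ge1] : exists2 y : algC,
    root (map_poly intr h) y & 1 <= `|(lead_coef f)%:~R * y|.
  by rewrite def_f [g * h]mulrC; apply: factor_root_norm_ge1; rewrite // mulrC -def_f.
have [q def_g] := factor_theorem _ _ gx0.
have def_fC : map_poly intr f = ('X - x%:P) * (q * map_poly intr h).
  by rewrite def_f rmorphM /= def_g mulrA [_ * q]mulrC.
have [r def_F r_root] := rescale_XsubC_mul def_fC.
rewrite (lead_coef_map_inj intr_inj) // in def_F r_root.
have size_fC : size (map_poly intr f : {poly algC}) = n.+2.
  by rewrite (size_map_inj_poly intr_inj).
have mon_F : rescale (map_poly intr f : {poly algC}) \is monic.
  by rewrite rescale_monic // size_fC.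
have qh_y : root (q * map_poly intr h) y by rewrite rootM hy0 orbT.
have := cofactor_root_lt1 mon_F (etrans (size_rescale _) size_fC)
  (rescale_intr_coef_gap algC size_f gap) def_F ax_ge1 (r_root _ qh_y).
by move/(le_lt_trans ay_ge1); rewrite ltxx.
Qed.

Theorem theoremB (m : nat) (f : {poly int}) :
  (2 <= m)%N ->
  size f = m.+1 ->
  primitive_intpoly f ->
  f`_0 * f`_m != 0 ->
  `|f`_m.-1| > 1 + \sum_(i < m.-1) `|f`_i| * `|f`_m| ^+ (m.-1 - i) ->
  irreducible_in_Zz f.
Proof.
case: m => [|[|n]] // _ size_f prim f0m gap.
have f0_neq0 : f`_0 != 0 by move: f0m; rewrite mulf_eq0 negb_or => /andP[].
have lead_f : f`_n.+2 = lead_coef f by rewrite lead_coefE size_f.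
rewrite lead_f in gap.
split; first exact: primitive_intpoly_neq0.
split=> [|g h def_f]; first by rewrite poly_unitE size_f.
have /orP[le1_g|le1_h] := dominant_subleading_factor_const size_f f0_neq0 gap def_f.
  by left; apply: primitive_const_factor_unit def_f prim le1_g.
by right; apply: (primitive_const_factor_unit _ prim le1_h); rewrite def_f mulrC.
Qed.
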